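(* Let $C$ be a weakly compact convex subset of a Banach space $X$ and let $T:C\to C$ be an orbitally Kannan mapping which diminishes the radius of orbits. Then the following are equivalent: (1) $T$ has a unique fixed point; (2) $\inf\{r_x(O_T(x)):x\in C\}=0$; (3) for every $x\in C$ with $r_x(O_T(x))>0$ there exists $y\in C$ with $r_x(O_T(x))>r_y(O_T(y))$.
   Context: For $x\in X$ and $A\subseteq X$, $r_x(A)=\sup\{\|x-y\|:y\in A\}$; $O_T(x)=\{x,Tx,T^2x,\dots\}$. $T$ is orbitally Kannan if $\|Tx-Ty\|\le\frac12\big(r_x(O_T(x))+r_y(O_T(y))\big)$ for all $x,y\in C$. $T$ diminishes the radius of orbits if $r_{Tx}(O_T(Tx))\le r_x(O_T(x))$ for all $x\in C$. *)

From HB Require Import structures.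
From mathcomp Require Import all_boot all_order all_algebra.
From mathcomp Require Import all_classical all_reals all_analysis.
Set Implicit Arguments. Unset Strict Implicit. Unset Printing Implicit Defensive.
Import Order.TTheory GRing.Theory Num.Theory.
Import numFieldNormedType.Exports.
Local Open Scope classical_set_scope.
Local Open Scope ring_scope.

Definition dual_index (R : realType) (X : normedModType R) :=
  {f : X -> R | (forall (a : R) (u v : X), f (a *: u + v) = a * f u + f v)
                /\ continuous f}.

Definition weak_space (R : realType) (X : normedModType R) : topologicalType :=
  sup_topology (fun i : dual_index X =>
    Topological.on (initial_topology (proj1_sig i))).

Definition weakly_compact (R : realType) (X : normedModType R) (C : set X) :=
  @compact (weak_space X) C.

Definition convex_in (R : realType) (X : normedModType R) (C : set X) :=
  forall x y, C x -> C y -> forall l : R, 0 <= l -> l <= 1 ->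
    C (l *: x + (1 - l) *: y).

Definition orbitT (X : Type) (T : X -> X) (x : X) : set X :=
  [set iter n T x | n in [set: nat]].

Definition orb_radius (R : realType) (X : normedModType R) (x : X) (A : set X)
  : \bar R := ereal_sup [set (`|x - y|)%:E | y in A].

Definition orbitally_kannan (R : realType) (X : normedModType R)
  (C : set X) (T : X -> X) :=
  forall x y, C x -> C y ->
    ((`|T x - T y|)%:E <= (2%:R^-1)%:E * (orb_radius x (orbitT T x) + orb_radius y (orbitT T y)))%E.

Definition diminishes_orbit_radius (R : realType) (X : normedModType R)
  (C : set X) (T : X -> X) :=
  forall x, C x -> (orb_radius (T x) (orbitT T (T x)) <= orb_radius x (orbitT T x))%E.

Definition has_unique_fixed_point (X : Type) (C : set X) (T : X -> X) :=
  exists! x : X, C x /\ T x = x.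

From HB Require Import structures.
From mathcomp Require Import all_boot all_order all_algebra.
From mathcomp Require Import all_classical all_reals all_analysis.
From mathcomp Require Import ring lra.
Set Implicit Arguments. Unset Strict Implicit. Unset Printing Implicit Defensive.
Import Order.TTheory GRing.Theory Num.Theory.
Import numFieldNormedType.Exports.
Local Open Scope classical_set_scope.
Local Open Scope ring_scope.

(* Weak compactness makes C norm bounded: every continuous functional is
   bounded on C, and a gliding hump built from Hahn-Banach norming functionals
   upgrades this to a norm bound (a uniform boundedness principle that does not
   need completeness of the dual).  Hence all orbit radii r(x) are finite.
   Let rho be their infimum.  By the Kannan condition, T y lies within
   (rho + e + r(w))/2 of every T w as soon as r(y) < rho + e; a weak cluster
   point z of these points inherits the bound with e = 0, because the norm is
   weakly lower semicontinuous.  Choosing w = T^k z and using r(T^k z) <= r(z)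
   gives r(z) <= rho, so the infimum is attained.  All three conditions then
   say that this minimal radius is 0, i.e. that z is a fixed point, which is
   unique by the Kannan condition. *)

Lemma inf_image_le (R : realType) (I : Type) (A : set I) (F : I -> R) b i :
  (forall j, A j -> b <= F j) -> A i -> inf (F @` A) <= F i.
Proof.
move=> Fb Ai; apply: ge_inf; last by exists i.
by exists b => _ [j Aj <-]; exact: Fb.
Qed.

Lemma le_inf_image (R : realType) (I : Type) (A : set I) (F : I -> R) c :
  A !=set0 -> (forall j, A j -> c <= F j) -> c <= inf (F @` A).
Proof.
move=> [i Ai] Fc; apply: lb_le_inf; first by exists (F i), i.
by move=> _ [j Aj <-]; exact: Fc.
Qed.

Section HahnBanach.
Variables (R : realType) (X : lmodType R).

Definition sublinear (q : X -> R) :=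
  (forall x y, q (x + y) <= q x + q y) /\ (forall a x, 0 <= a -> q (a *: x) <= a * q x).

Definition linear_functional (f : X -> R) :=
  forall a u v, f (a *: u + v) = a * f u + f v.

Lemma sublinear0 q : sublinear q -> q 0 = 0.
Proof.
move=> [qD qZ]; apply/eqP; rewrite eq_le; apply/andP; split.
  by have := qZ 0 0 (lexx _); rewrite scale0r mul0r.
by have := qD 0 0; rewrite addr0 -{1}(addr0 (q 0)) lerD2l.
Qed.

Lemma sublinearZ q a x : sublinear q -> 0 <= a -> q (a *: x) = a * q x.
Proof.
move=> sq; rewrite le0r => /orP[/eqP->|a_gt0].
  by rewrite scale0r mul0r sublinear0.
apply/eqP; rewrite eq_le sq.2 /=; last exact: ltW.
have := sq.2 a^-1 (a *: x); rewrite scalerA mulVf ?gt_eqF // scale1r.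
have ia_gt0 : 0 < a^-1 by rewrite invr_gt0.
move=> /(_ (ltW ia_gt0)) ?.
by rewrite -(ler_pM2l ia_gt0) mulrA mulVf ?gt_eqF // mul1r.
Qed.

Lemma sublinearN q x : sublinear q -> - q (- x) <= q x.
Proof. by move=> sq; have := sq.1 x (- x); rewrite subrr sublinear0 //; lra. Qed.

Definition shift_sublinear (q : X -> R) (y x : X) :=
  inf [set q (x + t *: y) - t * q y | t in [set t : R | 0 <= t]].

Lemma shift_sublinearP q y : sublinear q ->
  [/\ sublinear (shift_sublinear q y), forall x, shift_sublinear q y x <= q x
    & shift_sublinear q y (- y) <= - q y].
Proof.
move=> sq; set q' := shift_sublinear q y.
have lb x t : 0 <= t -> - q (- x) <= q (x + t *: y) - t * q y.
  move=> t0; rewrite lerBrDr -sublinearZ //.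
  by have := sq.1 (x + t *: y) (- x); rewrite addrC addKr; lra.
have q'_le x t : 0 <= t -> q' x <= q (x + t *: y) - t * q y.
  by move=> t0; apply: (@inf_image_le _ _ _ _ (- q (- x))) => // j; exact: lb.
have le_q' c x : (forall t, 0 <= t -> c <= q (x + t *: y) - t * q y) -> c <= q' x.
  by move=> h; apply: le_inf_image => //; exists 0; rewrite /= lexx.
have q'_le0 x : q' x <= q x.
  by apply: le_trans (q'_le _ 0 (lexx _)) _; rewrite scale0r addr0 mul0r subr0.
split => //; last first.
  apply: le_trans (q'_le _ 1 ler01) _.
  by rewrite scale1r addNr sublinear0 // mul1r sub0r.
split.
  move=> x1 x2; rewrite -lerBlDl; apply: (le_q') => t2 t2_ge0.
  rewrite lerBlDl -lerBlDr; apply: (le_q') => t1 t1_ge0; rewrite lerBlDr.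
  apply: le_trans (q'_le _ (t1 + t2) (addr_ge0 t1_ge0 t2_ge0)) _.
  have := sq.1 (x1 + t1 *: y) (x2 + t2 *: y).
  by rewrite addrACA -scalerDl; lra.
move=> a x; rewrite le0r => /orP[/eqP->|a_gt0].
  by rewrite scale0r mul0r -(sublinear0 sq); exact: q'_le0.
rewrite -ler_pdivrMl //; apply: (le_q') => t t_ge0; rewrite ler_pdivrMl //.
apply: le_trans (q'_le _ (a * t) (mulr_ge0 (ltW a_gt0) t_ge0)) _.
by rewrite -scalerA -scalerDr mulrBr mulrA lerB // sq.2 // ltW.
Qed.

(* Minimality against the shift along y forces q (- y) = - q y, and oddness
   turns subadditivity and positive homogeneity into linearity. *)
Lemma minimal_sublinear_linear q : sublinear q ->
  (forall q', sublinear q' -> (forall x, q' x <= q x) -> forall x, q x <= q' x) ->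
  linear_functional q.
Proof.
move=> sq q_min.
have qN y : q (- y) = - q y.
  have [sq' q'_le q'_y] := shift_sublinearP y sq.
  apply/eqP; rewrite eq_le -lerNl sublinearN // andbT.
  exact: le_trans (q_min _ sq' q'_le (- y)) q'_y.
have qD u v : q (u + v) = q u + q v.
  apply/eqP; rewrite eq_le sq.1 /=.
  by have := sq.1 (u + v) (- v); rewrite addrK qN; lra.
move=> a u v; rewrite qD; congr (_ + _).
have [a_ge0|a_lt0] := leP 0 a; first exact: sublinearZ.
by rewrite -[a]opprK scaleNr qN sublinearZ ?oppr_ge0 ?ltW // mulNr !opprK.
Qed.

Section Zorn.
Variable p : X -> R.
Hypothesis sp : sublinear p.

Let dominated := {q : X -> R | sublinear q /\ forall x, q x <= p x}.

Let below (s t : dominated) : bool := `[< forall x, sval t x <= sval s x >].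

Let dominated_lb (s : dominated) x : - p (- x) <= sval s x.
Proof.
apply: le_trans (sublinearN _ (proj1 (svalP s))).
by rewrite lerN2; exact: (proj2 (svalP s)).
Qed.

Let chain_inf (A : set dominated) :
  total_on A below -> exists t, forall s, A s -> below s t.
Proof.
move=> A_total; have [->|/set0P[s0 As0]] := eqVneq A set0.
  by exists (exist _ p (conj sp (fun x => lexx _))).
pose g x := inf [set sval s x | s in A].
have g_le s x : A s -> g x <= sval s x.
  by move=> As; apply: (@inf_image_le _ _ _ _ (- p (- x))) => // j _; exact: dominated_lb.
have le_g c x : (forall s, A s -> c <= sval s x) -> c <= g x.
  by move=> h; apply: le_inf_image => //; exists s0.
have sg : sublinear g.
  split.
    move=> x y.
    have g_le2 s1 s2 : A s1 -> A s2 -> g (x + y) <= sval s1 x + sval s2 y.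
      move=> As1 As2; have [/asboolP s21|/asboolP s12] := A_total _ _ As1 As2.
      - apply: le_trans (g_le _ _ As2) _; apply: le_trans ((proj1 (svalP s2)).1 _ _) _.
        by rewrite lerD2r s21.
      - apply: le_trans (g_le _ _ As1) _; apply: le_trans ((proj1 (svalP s1)).1 _ _) _.
        by rewrite lerD2l s12.
    rewrite -lerBlDl; apply: (le_g) => s2 As2; rewrite lerBlDl -lerBlDr.
    by apply: (le_g) => s1 As1; rewrite lerBlDr; exact: g_le2.
  move=> a x; rewrite le0r => /orP[/eqP->|a_gt0].
    rewrite scale0r mul0r; apply: le_trans (g_le _ _ As0) _.
    by rewrite sublinear0 //; exact: (proj1 (svalP s0)).
  rewrite -ler_pdivrMl //; apply: (le_g) => s As; rewrite ler_pdivrMl //.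
  exact: le_trans (g_le _ _ As) ((proj1 (svalP s)).2 _ _ (ltW a_gt0)).
have g_p x : g x <= p x := le_trans (g_le _ _ As0) ((proj2 (svalP s0)) x).
by exists (exist _ g (conj sg g_p)) => s As; apply/asboolP => x /=; exact: g_le.
Qed.

Lemma hahn_banach : exists f, linear_functional f /\ forall x, f x <= p x.
Proof.
have [| | | |t t_max] := @Zorn dominated below.
- by move=> t; apply/asboolP => x.
- move=> r s t /asboolP rs /asboolP st; apply/asboolP => x; exact: le_trans (st x) (rs x).
- move=> [s hs] [t ht] /asboolP /= ts /asboolP /= st.
  have e : s = t by apply/funext => x; apply/eqP; rewrite eq_le ts st.
  by subst t; congr exist; exact: Prop_irrelevance.
- exact: chain_inf.
exists (sval t); split; last exact: (proj2 (svalP t)).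
apply: minimal_sublinear_linear => [|q sq q_le x]; first exact: (proj1 (svalP t)).
have q_p y : q y <= p y := le_trans (q_le y) (proj2 (svalP t) y).
have tq : below t (exist _ q (conj sq q_p)) by apply/asboolP.
by rewrite -(t_max _ tq).
Qed.

End Zorn.

Lemma linear_functional0 f : linear_functional f -> f 0 = 0.
Proof. by move=> fl; have := fl 1 0 0; rewrite scale1r addr0 mul1r; lra. Qed.

Lemma linear_functionalB f : linear_functional f -> forall x y, f (x - y) = f x - f y.
Proof.
move=> fl x y; have := fl (-1) y x; rewrite scaleN1r mulN1r addrC => ->.
by rewrite addrC.
Qed.

Lemma linear_functionalN f : linear_functional f -> forall x, f (- x) = - f x.
Proof. by move=> fl x; rewrite -sub0r linear_functionalB // linear_functional0 // sub0r. Qed.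

End HahnBanach.

Section NormingFunctional.
Variables (R : realType) (X : normedModType R).

Lemma norm_sublinear : sublinear (fun x : X => `|x|).
Proof.
split; first exact: ler_normD.
by move=> a x a_ge0; rewrite normrZ ger0_norm.
Qed.

Lemma norming_functional (v : X) : exists f : X -> R,
  [/\ linear_functional f, f v = `|v| & forall x, `|f x| <= `|x|].
Proof.
have [sq q_le q_v] := shift_sublinearP v norm_sublinear.
have [f [fl f_le]] := hahn_banach sq.
have f_norm x : f x <= `|x| := le_trans (f_le x) (q_le x).
exists f; split => //.
  apply/eqP; rewrite eq_le f_norm /=.
  by have := le_trans (f_le (- v)) q_v; rewrite linear_functionalN // lerN2.
move=> x; rewrite ler_norml f_norm andbT lerNl -linear_functionalN //.
by rewrite -(normrN x) f_norm.
Qed.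

Lemma contraction_continuous (f : X -> R) : linear_functional f ->
  (forall x, `|f x| <= `|x|) -> continuous f.
Proof.
move=> fl f_le x; apply/cvgrPdist_lt => e e_gt0; near=> y.
rewrite -linear_functionalB //; apply: le_lt_trans (f_le _) _.
by near: y; apply: cvgr_dist_lt.
Unshelve. all: by end_near.
Qed.

Definition dual_contraction (f : X -> R) (fl : linear_functional f)
  (f_le : forall x, `|f x| <= `|x|) : dual_index X :=
  exist _ f (conj fl (contraction_continuous fl f_le)).

End NormingFunctional.

Section WeakTopology.
Variables (R : realType) (X : normedModType R).

Definition weakly_adherent (A : set X) (z : X) :=
  forall (i : dual_index X) e, 0 < e -> exists2 u, A u & `|sval i z - sval i u| < e.

Lemma weak_nbhs_dual (i : dual_index X) (z : X) e : 0 < e ->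
  @nbhs (weak_space X) (weak_space X) z [set x | `|sval i z - sval i x| < e].
Proof.
move=> e_gt0.
have := (@cvg_sup X (dual_index X) (fun i : dual_index X =>
    Topological.on (initial_topology (proj1_sig i)))
  (@nbhs (weak_space X) (weak_space X) z) z _).1 (@cvg_id _ _) i.
apply; have := @initial_continuous X R (proj1_sig i) z.
by move=> /cvgr_dist_lt /(_ e e_gt0).
Qed.

Lemma weakly_compact_adherent (C : set X) (I : Type) (D : set I) (A : I -> set X) :
  weakly_compact C -> D !=set0 ->
  (forall i j, D i -> D j -> exists2 k, D k & A k `<=` A i `&` A j) ->
  (forall i, D i -> A i !=set0) -> (forall i, D i -> A i `<=` C) ->
  exists2 z, C z & forall i, D i -> weakly_adherent (A i) z.
Proof.
move=> wc [i0 Di0] A_dir A_n0 AC.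
pose F : set_system (weak_space X) := filter_from D A.
have : ProperFilter F.
  by apply: filter_from_proper A_n0; apply: filter_from_filter A_dir; exists i0.
move=> /wc /(_ (ex_intro2 _ _ i0 Di0 (AC _ Di0))) [z [Cz z_cl]].
exists z => // i Di j e e_gt0.
have [u [Au ?]] := z_cl (A i) _ (ex_intro2 _ _ i Di (fun x h => h)) (weak_nbhs_dual j z e_gt0).
by exists u.
Qed.

(* The norm is weakly lower semicontinuous: test z - c against a norming functional. *)
Lemma weakly_adherent_norm_le (A : set X) z c s : weakly_adherent A z ->
  (forall u, A u -> `|u - c| <= s) -> `|z - c| <= s.
Proof.
move=> Az A_le; rewrite leNgt; apply/negP => s_lt.
have [f [fl f_zc f_le]] := norming_functional (z - c).
have [|u Au fu] := Az (dual_contraction fl f_le) (`|z - c| - s); first by rewrite subr_gt0.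
have := A_le u Au; have := f_le (u - c); rewrite /= in fu.
rewrite !(linear_functionalB fl) in f_zc *.
have := ler_norm (f u - f c); have := ler_norm (f z - f u); lra.
Qed.

Lemma weakly_compact_dual_bounded (C : set X) : weakly_compact C ->
  forall i : dual_index X, exists M, forall x, C x -> `|sval i x| <= M.
Proof.
move=> wc i; apply/not_existsP => unb.
pose A t := [set x | C x /\ t <= `|sval i x|].
have A_n0 t : A t !=set0.
  have /existsNP [x /not_implyP [Cx /negP]] := unb t.
  by rewrite -ltNge => ?; exists x; split => //; exact: ltW.
have [|t s _ _|||z _ z_adh] := @weakly_compact_adherent C _ setT A wc.
- by exists 0.
- by exists (Num.max t s) => // x [Cx]; rewrite ge_max => /andP[].
- by move=> t _; exact: A_n0.
- by move=> t _ x [].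
have [u [_ fu] fzu] := z_adh (`|sval i z| + 1) I i 1 ltr01.
have := ler_distD (sval i z) (sval i u) 0; rewrite !subr0 (distrC (sval i u)); lra.
Qed.

End WeakTopology.

Section GlidingHump.
Variables (R : realType) (X : normedModType R) (c : nat -> X) (f : nat -> X -> R).
Hypothesis f_lin : forall n, linear_functional (f n).
Hypothesis f_le : forall n x, `|f n x| <= `|x|.
Hypothesis f_c : forall n, f n (c n) = `|c n|.

Definition hump_weight n : R := (3%:R ^+ n.+1)^-1.

Lemma hump_weight_gt0 n : 0 < hump_weight n.
Proof. by rewrite invr_gt0 exprn_gt0. Qed.

Lemma hump_weightS n : hump_weight n.+1 = hump_weight n / 3%:R.
Proof. by rewrite /hump_weight exprS invfM mulrC. Qed.

Lemma hump_weight_lt K e : 0 < e -> exists N, K * hump_weight N < e.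
Proof.
move=> e_gt0; have [K_le0|K_gt0] := leP K 0.
  by exists 0%N; have := hump_weight_gt0 0; nra.
pose N := Num.bound (K / e); exists N.
have N_gt : K / e < N%:R by apply: archi_boundP; rewrite divr_ge0 ?ltW.
have N_le : (N%:R : R) <= 3%:R ^+ N.+1.
  elim: (N) => [|n IH]; first by rewrite expr1 ler0n.
  have : 1 <= (3%:R : R) ^+ n.+1 by rewrite exprn_ege1 // ler1n.
  by rewrite (exprS _ n.+1) -[n.+1%:R]natr1; lra.
rewrite ltr_pdivrMr ?exprn_gt0 // in N_gt *.
by rewrite ltr_pdivrMr ?exprn_gt0 //; nra.
Qed.

(* The signs make each new term reinforce the partial sum at [c n]. *)
Fixpoint hump n x : R :=
  if n is m.+1 then
    hump m x + (if 0 <= hump m (c m) then 1 else -1) * hump_weight m * f m x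
  else 0.

Lemma hump_linear n : linear_functional (hump n).
Proof.
elim: n => [|n IH] a u v /=; first by rewrite mulr0 addr0.
rewrite IH f_lin; set s := (if _ then _ else _); ring.
Qed.

(* [3/2 * (w n - w m)] is the geometric sum [w n + ... + w (m - 1)]. *)
Lemma hump_dist x n m : (n <= m)%N ->
  `|hump m x - hump n x| <= 3%:R / 2%:R * (hump_weight n - hump_weight m) * `|x|.
Proof.
move=> /subnK <-; elim: (m - n)%N => [|k IH].
  by rewrite add0n !subrr normr0 mulr0 mul0r.
rewrite addSn /=; set s := (if _ then _ else _).
have s_term : `|s * hump_weight (k + n) * f (k + n) x| <= hump_weight (k + n) * `|x|.
  rewrite !normrM (gtr0_norm (hump_weight_gt0 _)).
  have -> : `|s| = 1 by rewrite /s; case: ifP => _; rewrite ?normrN normr1.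
  by rewrite mul1r ler_pM2l ?hump_weight_gt0.
rewrite addrAC hump_weightS; apply: le_trans (ler_normD _ _) _.
have := hump_weight_gt0 (k + n); have := normr_ge0 x; nra.
Qed.

Lemma hump_cvg x : cvgn (hump^~ x).
Proof.
apply: cauchy_cvg; apply: cauchy_exP => e e_gt0.
have [N hN] := hump_weight_lt (3%:R / 2%:R * `|x|) e_gt0.
exists (hump N x); rewrite /fmap /=; near=> n; rewrite /ball /= distrC.
apply: le_lt_trans (hump_dist x _) _; first by near: n; exists N.
apply: le_lt_trans hN.
have := hump_weight_gt0 n; have := normr_ge0 x; nra.
Unshelve. all: by end_near.
Qed.

Definition glided_hump x := lim (hump n x @[n --> \oo]).

Lemma glided_hump_dist x m :
  `|glided_hump x - hump m x| <= 3%:R / 2%:R * hump_weight m * `|x|.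
Proof.
have dist_cvg : `|hump n x - hump m x| @[n --> \oo] --> `|glided_hump x - hump m x|.
  by apply: cvg_norm; apply: cvgB; [exact: hump_cvg|exact: cvg_cst].
apply: (cvgr_to_le dist_cvg).
near=> n; apply: le_trans (hump_dist x _) _; first by near: n; exists m.
have := hump_weight_gt0 n; have := normr_ge0 x; nra.
Unshelve. all: by end_near.
Qed.

Lemma glided_hump_linear : linear_functional glided_hump.
Proof.
move=> a u v; apply: cvg_lim => //.
have -> : (fun n => hump n (a *: u + v)) = (cst a \* hump^~ u) + hump^~ v.
  by apply/funext => n; rewrite hump_linear.
by apply: cvgD; [apply: cvgM; [exact: cvg_cst|]|]; exact: hump_cvg.
Qed.

Lemma glided_hump_le x : `|glided_hump x| <= `|x|.
Proof.
have := glided_hump_dist x 0; rewrite subr0 /hump_weight expr1.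
have -> : 3%:R / 2%:R * (3%:R : R)^-1 = 2%:R^-1 by rewrite mulrAC divff ?mul1r // pnatr_eq0.
by have := normr_ge0 x; lra.
Qed.

Lemma glided_hump_at n : hump_weight n * `|c n| / 2%:R <= `|glided_hump (c n)|.
Proof.
have hump_at : hump_weight n * `|c n| <= `|hump n.+1 (c n)|.
  rewrite /= f_c; have := hump_weight_gt0 n; have := normr_ge0 (c n).
  by case: ifP => [|/negbT]; rewrite ?ler_normr -?ltNge; nra.
have := glided_hump_dist (c n) n.+1; rewrite hump_weightS.
have := ler_distD (glided_hump (c n)) (hump n.+1 (c n)) 0.
rewrite !subr0 (distrC (hump _ _)); lra.
Qed.

End GlidingHump.

Lemma weakly_bounded_bounded (R : realType) (X : normedModType R) (C : set X) :
  (forall i : dual_index X, exists M, forall x, C x -> `|sval i x| <= M) ->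
  exists M, forall x, C x -> `|x| <= M.
Proof.
move=> C_wbd; apply/not_existsP => C_unb.
have /choice [c c_big] n : exists x, C x /\ 2%:R * n%:R / hump_weight R n < `|x|.
  have /existsNP [x /not_implyP [Cx /negP]] := C_unb (2%:R * n%:R / hump_weight R n).
  by rewrite -ltNge => ?; exists x.
have /choice [f f_norming] n := norming_functional (c n).
have f_lin n : linear_functional (f n) by case: (f_norming n).
have f_le n x : `|f n x| <= `|x| by case: (f_norming n) => _ _; apply.
have f_c n : f n (c n) = `|c n| by case: (f_norming n).
have [M hM] := C_wbd (dual_contraction (glided_hump_linear c f_lin f_le) (glided_hump_le c f_le)).
pose n := Num.bound `|M|.
have n_gt : `|M| < n%:R by apply: archi_boundP.
have := hM _ (c_big n).1; have := glided_hump_at f_le f_c n.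
have := (c_big n).2; rewrite ltr_pdivrMr ?hump_weight_gt0 //.
by have := ler_norm M; lra.
Qed.

Lemma weakly_compact_bounded (R : realType) (X : normedModType R) (C : set X) :
  weakly_compact C -> exists M, forall x, C x -> `|x| <= M.
Proof. by move=> /weakly_compact_dual_bounded; exact: weakly_bounded_bounded. Qed.

Section OrbitRadius.
Variables (R : realType) (X : normedModType R) (C : set X) (T : X -> X) (M : R).
Hypothesis TC : forall x, C x -> C (T x).
Hypothesis C_bd : forall x, C x -> `|x| <= M.

Definition orbit_radius x : R := fine (orb_radius x (orbitT T x)).

Definition orbit_radius_reducible :=
  forall x, C x -> (0 < orb_radius x (orbitT T x))%E ->
    exists2 y, C y & (orb_radius y (orbitT T y) < orb_radius x (orbitT T x))%E.

Lemma iter_in x k : C x -> C (iter k T x).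
Proof. by move=> Cx; elim: k => //= k; exact: TC. Qed.

Lemma orb_radius_ge x k : ((`|x - iter k T x|)%:E <= orb_radius x (orbitT T x))%E.
Proof. by apply: ereal_sup_ubound; exists (iter k T x) => //; exists k. Qed.

Lemma orb_radius_le x b : (forall k, ((`|x - iter k T x|)%:E <= b)%E) ->
  (orb_radius x (orbitT T x) <= b)%E.
Proof. by move=> x_le; apply: ge_ereal_sup => _ [y [k _ <-] <-]; exact: x_le. Qed.

Lemma orb_radiusE x : C x -> orb_radius x (orbitT T x) = (orbit_radius x)%:E.
Proof.
move=> Cx; rewrite /orbit_radius fineK // ge0_fin_numE.
  apply: le_lt_trans (ltry (M + M)); apply: orb_radius_le => k; rewrite lee_fin.
  by apply: le_trans (ler_normB _ _) _; apply: lerD; [exact: C_bd|exact/C_bd/iter_in].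
by apply: le_trans (orb_radius_ge x 0); rewrite lee_fin.
Qed.

Lemma orbit_radius_ge x k : C x -> `|x - iter k T x| <= orbit_radius x.
Proof. by move=> Cx; have := orb_radius_ge x k; rewrite orb_radiusE // lee_fin. Qed.

Lemma orbit_radius_le x b : C x -> (forall k, `|x - iter k T x| <= b) -> orbit_radius x <= b.
Proof.
move=> Cx x_le; rewrite -lee_fin -orb_radiusE //.
by apply: orb_radius_le => k; rewrite lee_fin.
Qed.

Lemma orbit_radius_ge0 x : C x -> 0 <= orbit_radius x.
Proof. by move=> Cx; exact: le_trans (normr_ge0 _) (orbit_radius_ge 0 Cx). Qed.

Lemma orbit_radius_eq0 x : C x -> orbit_radius x = 0 <-> T x = x.
Proof.
move=> Cx; split => [r0|Tx].
  have := orbit_radius_ge 1 Cx; rewrite r0 /= => xTx_le0.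
  by apply/eqP; rewrite eq_sym -subr_eq0 -normr_eq0 eq_le xTx_le0 normr_ge0.
apply/eqP; rewrite eq_le orbit_radius_ge0 // andbT; apply: orbit_radius_le => // k.
have -> : iter k T x = x by elim: k => //= k ->.
by rewrite subrr normr0.
Qed.

Section Kannan.
Hypothesis T_kannan : orbitally_kannan C T.
Hypothesis T_dim : diminishes_orbit_radius C T.

Lemma kannan_orbit_radius x y : C x -> C y ->
  `|T x - T y| <= 2%:R^-1 * (orbit_radius x + orbit_radius y).
Proof. by move=> Cx Cy; have := T_kannan Cx Cy; rewrite !orb_radiusE // -EFinD -EFinM lee_fin. Qed.

Lemma orbit_radius_iter x k : C x -> orbit_radius (iter k T x) <= orbit_radius x.
Proof.
move=> Cx; elim: k => //= k; apply: le_trans.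
have Ck := iter_in k Cx; have := T_dim Ck.
by rewrite !orb_radiusE ?lee_fin //; exact: TC.
Qed.

Lemma fixed_point_unique x y : C x -> C y -> T x = x -> T y = y -> x = y.
Proof.
move=> Cx Cy Tx Ty; have := kannan_orbit_radius Cx Cy.
rewrite Tx Ty !(orbit_radius_eq0 _).2 // addr0 mulr0 => xy_le0.
by apply/eqP; rewrite -subr_eq0 -normr_eq0 eq_le xy_le0 normr_ge0.
Qed.

(* Take w = T^k z: the orbit of z stays within (rho + r(z))/2 of z. *)
Lemma orbit_radius_le_center z rho : C z ->
  (forall w, C w -> `|z - T w| <= 2%:R^-1 * (rho + orbit_radius w)) ->
  orbit_radius z <= rho.
Proof.
move=> Cz z_le.
have rz_le : orbit_radius z <= 2%:R^-1 * (rho + orbit_radius z).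
  apply: orbit_radius_le => // -[|k].
    by rewrite subrr normr0; apply: le_trans (z_le _ Cz).
  apply: le_trans (z_le _ (iter_in k Cz)) _.
  by rewrite ler_pM2l ?invr_gt0 ?ltr0n // lerD2l orbit_radius_iter.
lra.
Qed.

Lemma orbit_radius_has_min : weakly_compact C -> C !=set0 ->
  exists2 z, C z & forall x, C x -> orbit_radius z <= orbit_radius x.
Proof.
move=> C_wc [x0 Cx0]; set rho := inf [set orbit_radius x | x in C].
have rho_le x : C x -> rho <= orbit_radius x.
  by apply: inf_image_le => y; exact: orbit_radius_ge0.
have rho_approx e : 0 < e -> exists2 y, C y & orbit_radius y < rho + e.
  move=> e_gt0; have /inf_lt[|_ [y Cy <-]] : rho < rho + e by rewrite ltrDl.
    by exists (orbit_radius x0), x0.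
  by exists y.
pose A e := [set u | C u /\ forall w, C w ->
  `|u - T w| <= 2%:R^-1 * (rho + e + orbit_radius w)].
have A_mono e e' : e <= e' -> A e `<=` A e'.
  move=> e_le u [Cu u_le]; split => // w Cw; apply: le_trans (u_le w Cw) _.
  by rewrite ler_pM2l ?invr_gt0 ?ltr0n // !lerD2r lerD2l.
have [||e e_gt0||z Cz z_adh] := @weakly_compact_adherent _ _ C _ [set e | 0 < e] A C_wc.
- by exists 1; exact: ltr01.
- move=> e e' e_gt0 e'_gt0; exists (Num.min e e'); first by rewrite /= lt_min e_gt0.
  by move=> u Au; split; apply: A_mono Au; rewrite ge_min lexx ?orbT.
- have [y Cy ry_lt] := rho_approx e e_gt0.
  exists (T y); split; first exact: TC.
  move=> w Cw; apply: le_trans (kannan_orbit_radius Cy Cw) _.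
  by rewrite ler_pM2l ?invr_gt0 ?ltr0n // lerD2r ltW.
- by move=> e _ u [].
exists z => // x Cx; apply: le_trans (rho_le x Cx).
apply: orbit_radius_le_center Cz _ => w Cw; apply/ler_addgt0Pr => e e_gt0.
have e2_gt0 : 0 < 2%:R * e by rewrite mulr_gt0.
by have := weakly_adherent_norm_le (z_adh _ e2_gt0) (fun u (Au : A _ u) => Au.2 w Cw); lra.
Qed.

Section Minimizer.
Variable z : X.
Hypothesis Cz : C z.
Hypothesis z_min : forall x, C x -> orbit_radius z <= orbit_radius x.

Lemma ereal_inf_orb_radius :
  ereal_inf [set orb_radius x (orbitT T x) | x in C] = (orbit_radius z)%:E.
Proof.
apply/eqP; rewrite eq_le; apply/andP; split.
  by apply: ge_ereal_inf; exists (orb_radius z (orbitT T z)); [exists z|rewrite orb_radiusE].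
by apply/ereal_infP => _ [x Cx <-]; rewrite orb_radiusE // lee_fin z_min.
Qed.

Lemma has_unique_fixed_pointE : has_unique_fixed_point C T <-> orbit_radius z = 0.
Proof.
split => [[x [[Cx Tx] _]]|rz0].
  apply/eqP; rewrite eq_le orbit_radius_ge0 // andbT.
  by rewrite -((orbit_radius_eq0 Cx).2 Tx) z_min.
have Tz := (orbit_radius_eq0 Cz).1 rz0.
by exists z; split => // y [Cy Ty]; exact: fixed_point_unique.
Qed.

Lemma orbit_radius_reducibleE : orbit_radius_reducible <-> orbit_radius z = 0.
Proof.
split => [reducible|rz0 x Cx].
  apply/eqP; rewrite eq_le orbit_radius_ge0 // andbT leNgt; apply/negP => rz_gt0.
  have [|y Cy] := reducible z Cz; first by rewrite orb_radiusE // lte_fin.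
  by rewrite !orb_radiusE // lte_fin ltNge z_min.
rewrite orb_radiusE // lte_fin => rx_gt0; exists z => //.
by rewrite !orb_radiusE // lte_fin rz0.
Qed.

End Minimizer.
End Kannan.
End OrbitRadius.

Theorem theorem4p4 (R : realType) (X : completeNormedModType R) (C : set X)
  (T : X -> X) :
  C !=set0 -> weakly_compact C -> convex_in C ->
  (forall x, C x -> C (T x)) ->
  orbitally_kannan C T -> diminishes_orbit_radius C T ->
  [/\ (has_unique_fixed_point C T <->
        ereal_inf [set orb_radius x (orbitT T x) | x in C] = 0%E),
      (ereal_inf [set orb_radius x (orbitT T x) | x in C] = 0%E <->
        (forall x, C x -> (0 < orb_radius x (orbitT T x))%E ->
           exists2 y, C y & (orb_radius y (orbitT T y) < orb_radius x (orbitT T x))%E)) &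
      (has_unique_fixed_point C T <->
        (forall x, C x -> (0 < orb_radius x (orbitT T x))%E ->
           exists2 y, C y & (orb_radius y (orbitT T y) < orb_radius x (orbitT T x))%E))].
Proof.
move=> C_n0 C_wc _ TC T_kannan T_dim.
have [M C_bd] := weakly_compact_bounded C_wc.
have [z Cz z_min] := orbit_radius_has_min TC C_bd T_kannan T_dim C_wc C_n0.
have fixE := has_unique_fixed_pointE TC C_bd T_kannan Cz z_min.
have reducibleE := orbit_radius_reducibleE TC C_bd Cz z_min.
have infE : ereal_inf [set orb_radius x (orbitT T x) | x in C] = 0%E <->
    orbit_radius T z = 0.
  by rewrite (ereal_inf_orb_radius TC C_bd Cz z_min); split => [[]|->].
split.
- exact: iff_trans fixE (iff_sym infE).
- exact: iff_trans infE (iff_sym reducibleE).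
- exact: iff_trans fixE (iff_sym reducibleE).
Qed.
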